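(* Let $q\ge1$ be an integer and let $X$ be a random variable such that $qX$ is integer-valued almost surely, with $\mathbb E|X|<\infty$. Then \[ \mathbb E\lfloor X\rfloor=\mathbb E X-\frac12+\frac1{2q}+\sum_{j=1}^{q-1}\frac{1}{q(1-e^{-2\pi\mathrm i j/q})}\varphi_X(2\pi j). \] If $q$ is even, then \[ \mathbb E\langle X\rangle=\mathbb E X+\frac1{2q}+\sum_{j=1}^{q-1}\frac{(-1)^j}{q(1-e^{-2\pi\mathrm i j/q})}\varphi_X(2\pi j). \] If $q$ is odd, then \[ \mathbb E\langle X\rangle=\mathbb E X+\sum_{j=1}^{q-1}\frac{(-1)^j}{q(e^{\pi\mathrm i j/q}-e^{-\pi\mathrm i j/q})}\varphi_X(2\pi j). \]
   Context: For a random variable $Y$, $\varphi_Y(t):=\mathbb E\, e^{\mathrm i tY}$ is its characteristic function. $\lfloor x\rfloor$ is $x$ rounded down to an integer, and $\langle x\rangle:=\lfloor x+\tfrac12\rfloor$ is $x$ rounded to the nearest integer, with ties broken upward. *)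

From HB Require Import structures.
From mathcomp Require Import all_boot all_order all_algebra.
From mathcomp Require Import all_classical all_reals all_analysis.
From mathcomp Require Import complex.
Set Implicit Arguments. Unset Strict Implicit. Unset Printing Implicit Defensive.
Import Order.TTheory GRing.Theory Num.Theory.
Local Open Scope ring_scope.

Definition cexpi (R : realType) (theta : R) : R[i] :=
  Complex (cos theta) (sin theta).

Definition charfun (d : measure_display) (T : measurableType d) (R : realType)
  (P : probability T R) (X : T -> R) (t : R) : R[i] :=
  Complex (fine ('E_P[fun w => cos (t * X w)])%E)
          (fine ('E_P[fun w => sin (t * X w)])%E).

Definition floorR (R : realType) (x : R) : R := (Num.floor x)%:~R.
Definition roundR (R : realType) (x : R) : R := (Num.floor (x + 2^-1))%:~R.

(* If [q x] is an integer then [x = floor x + r/q] with [0 <= r < q], so that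
   [e^(2 pi i j x) = w^(j r)] for the primitive root [w = e^(2 pi i/q)].  The
   finite Fourier identity [sum_(j=1)^(q-1) w^(j r) / (1 - w^-j) = (q-1)/2 - r]
   then writes [floor x] as [x - 1/2 + 1/(2q)] plus a combination of the
   [e^(2 pi i j x)]; rounding is flooring of [x + 1/2] (q even) or of
   [x + floor(q/2)/q] (q odd), a shift that only changes the phases.  Taking
   expectations of this pointwise identity gives the characteristic function. *)

From HB Require Import structures.
From mathcomp Require Import all_boot all_order all_algebra.
From mathcomp Require Import all_classical all_reals all_analysis.
From mathcomp Require Import complex.
From mathcomp Require Import ring lra measurable_realfun.
Set Implicit Arguments.
Unset Strict Implicit.
Unset Printing Implicit Defensive.
Import Order.TTheory GRing.Theory Num.Theory.
Local Open Scope ring_scope.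

Lemma inv_1subV_add_inv_1sub (F : fieldType) (u : F) :
  u != 0 -> u != 1 -> (1 - u^-1)^-1 + (1 - u)^-1 = 1.
Proof.
move=> u0 u1.
have u1' : u - 1 != 0 by rewrite subr_eq0.
have -> : 1 - u^-1 = (u - 1) / u by field.
have -> : 1 - u = - (u - 1) by ring.
by rewrite invfM invrK invrN; field.
Qed.

Section RootOfUnity.
Variables (F : fieldType) (w : F) (q : nat).
Hypotheses (q_gt0 : (0 < q)%N) (wq : w ^+ q = 1)
  (w_prim : forall j, (0 < j < q)%N -> w ^+ j != 1).

Lemma root_neq0 : w != 0.
Proof. by apply: contra_eq_neq wq => ->; rewrite expr0n gtn_eqF // eq_sym oner_neq0. Qed.

Lemma sum_root_pow m : (0 < m < q)%N -> \sum_(1 <= j < q) w ^+ (j * m) = -1.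
Proof.
move=> m_range.
have wm1 : w ^+ m - 1 != 0 by rewrite subr_eq0 w_prim.
have sum0 : \sum_(0 <= j < q) w ^+ (j * m) = 0.
  have := subrX1 (w ^+ m) q.
  rewrite -exprM mulnC exprM wq expr1n subrr => /esym/eqP.
  rewrite mulf_eq0 (negbTE wm1) /= => /eqP sum0.
  by rewrite big_mkord -[RHS]sum0; apply: eq_bigr => i _; rewrite mulnC exprM.
by move: sum0; rewrite (big_ltn q_gt0) mul0n expr0 => /eqP; rewrite addrC addr_eq0 => /eqP.
Qed.

Lemma sum_inv_1subV_root : 2 * \sum_(1 <= j < q) (1 - (w ^+ j)^-1)^-1 = (q.-1)%:R.
Proof.
rewrite mulr2n mulrDl mul1r [X in _ + X = _]big_nat_rev -big_split /=.
rewrite (eq_big_nat _ _ (F2 := fun _ => 1)) ?big_const_nat ?iter_addr_0 ?subn1 //.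
move=> j /andP[j_gt0 jq]; rewrite add1n subSS.
have -> : (w ^+ (q - j))^-1 = w ^+ j.
  apply: (mulfI (expf_neq0 (q - j) root_neq0)).
  by rewrite divff ?expf_neq0 ?root_neq0 // -exprD subnK ?wq // ltnW.
by apply: inv_1subV_add_inv_1sub; rewrite ?expf_neq0 ?root_neq0 ?w_prim ?j_gt0.
Qed.

(* Going from [r] to [r+1] adds [\sum_j w^(j (r+1)) = -1], because
   [w^j / (1 - w^-j) = 1 / (1 - w^-j) + w^j]. *)
Lemma sum_root_pow_inv_1subV r : (r < q)%N ->
  2 * \sum_(1 <= j < q) w ^+ (j * r) * (1 - (w ^+ j)^-1)^-1 = (q.-1)%:R - 2 * r%:R.
Proof.
elim: r => [_|r IHr r_lt].
  rewrite mulr0 subr0 -sum_inv_1subV_root; congr (_ * _).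
  by apply: eq_bigr => j _; rewrite muln0 expr0 mul1r.
have -> : \sum_(1 <= j < q) w ^+ (j * r.+1) * (1 - (w ^+ j)^-1)^-1 =
    \sum_(1 <= j < q) w ^+ (j * r) * (1 - (w ^+ j)^-1)^-1
  + \sum_(1 <= j < q) w ^+ (j * r.+1).
  rewrite -big_split /=; apply: eq_big_nat => j /andP[j_gt0 jq].
  have wj0 : w ^+ j != 0 by rewrite expf_neq0 // root_neq0.
  have wj1 : w ^+ j - 1 != 0 by rewrite subr_eq0 w_prim // j_gt0.
  rewrite mulnS exprD.
  have -> : 1 - (w ^+ j)^-1 = (w ^+ j - 1) / w ^+ j by field.
  by rewrite invfM invrK; field.
by rewrite mulrDr IHr ?(ltnW r_lt) // sum_root_pow // -addn1 natrD; ring.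
Qed.

End RootOfUnity.

Section Cexpi.
Local Open Scope complex_scope.
Variable R : realType.
Implicit Types (a b : R) (q j : nat).

Lemma cexpi0 : cexpi (0 : R) = 1.
Proof. by rewrite /cexpi cos0 sin0. Qed.

Lemma cexpiD a b : cexpi (a + b) = cexpi a * cexpi b.
Proof. by rewrite /cexpi cosD sinD /=; congr Complex; ring. Qed.

Lemma cexpi_neq0 a : cexpi a != 0.
Proof.
have : cexpi a * cexpi (- a) = 1 by rewrite -cexpiD subrr cexpi0.
by apply: contra_eq_neq => ->; rewrite mul0r eq_sym oner_neq0.
Qed.

Lemma cexpiN a : cexpi (- a) = (cexpi a)^-1.
Proof.
apply: (mulIf (cexpi_neq0 a)).
by rewrite -cexpiD addNr cexpi0 mulVf ?cexpi_neq0.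
Qed.

Lemma cexpiMn n a : cexpi (n%:R * a) = cexpi a ^+ n.
Proof.
elim: n => [|n IHn]; first by rewrite mul0r cexpi0 expr0.
by rewrite -addn1 natrD mulrDl mul1r cexpiD IHn exprD expr1.
Qed.

Lemma cexpi_2pi : cexpi (2 * pi : R) = 1.
Proof. by rewrite /cexpi mulr_natl cos2pi sin2pi. Qed.

Lemma cexpi_2pi_int (z : int) : cexpi (2 * pi * z%:~R : R) = 1.
Proof.
case: z => n; first by rewrite mulrC cexpiMn cexpi_2pi expr1n.
by rewrite NegzE mulrNz mulrN cexpiN mulrC cexpiMn cexpi_2pi expr1n invr1.
Qed.

Lemma cexpi_pi_nat j : cexpi (pi * j%:R : R) = (-1) ^+ j.
Proof.
have cexpi_pi : cexpi (pi : R) = -1.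
  by apply/eqP; rewrite eq_complex /= cospi sinpi oppr0 !eqxx.
by rewrite mulrC cexpiMn cexpi_pi.
Qed.

Lemma cexpi_2pi_div_exp q j : cexpi (2 * pi / q%:R : R) ^+ j = cexpi (2 * pi * j%:R / q%:R).
Proof. by rewrite -cexpiMn; congr cexpi; ring. Qed.

Lemma cexpi_2pi_div_expq q : (0 < q)%N -> cexpi (2 * pi / q%:R : R) ^+ q = 1.
Proof.
move=> q_gt0; rewrite -cexpiMn mulrC divfK ?cexpi_2pi //.
by rewrite pnatr_eq0 -lt0n.
Qed.

(* [2 pi j / q = 2 y] with [0 < y < pi], and [cos (2 y) = 1] would force [sin y = 0]. *)
Lemma cexpi_2pi_div_neq1 q j : (0 < j < q)%N -> cexpi (2 * pi * j%:R / q%:R : R) != 1.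
Proof.
move=> /andP[j_gt0 jq].
have q_gt0 : (0 : R) < q%:R by rewrite ltr0n (ltn_trans j_gt0 jq).
set y := pi * j%:R / q%:R : R.
have -> : 2 * pi * j%:R / q%:R = y *+ 2 by rewrite /y mulr_natl -mulr_natl; ring.
have y_gt0 : 0 < y by rewrite /y divr_gt0 // mulr_gt0 ?pi_gt0 // ltr0n.
have y_lt_pi : y < pi by rewrite /y ltr_pdivrMr // ltr_pM2l ?pi_gt0 // ltr_nat.
have siny_gt0 : 0 < sin y by apply: sin_gt0_pi; rewrite y_gt0 y_lt_pi.
apply/negP => /eqP [] /[!cos_mulr2n] cos2y _.
have : sin y ^+ 2 = 0 by rewrite sin2cos2; lra.
by move/eqP; rewrite expf_eq0 /= gt_eqF.
Qed.

End Cexpi.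

Section PointwiseFourier.
Local Open Scope complex_scope.
Variable R : realType.
Implicit Types (x : R) (z : int) (q : nat).

Lemma floor_add_frac q x z : (0 < q)%N -> q%:R * x = z%:~R ->
  exists2 r : nat, (r < q)%N & x = (Num.floor x)%:~R + r%:R / q%:R.
Proof.
move=> q_gt0 qx.
have /andP[floor_le lt_floor1] := Num.Theory.floor_itv x.
set m := Num.floor x in floor_le lt_floor1 *.
set k := z - m * q%:Z.
have kE : k%:~R = q%:R * (x - m%:~R) :> R.
  by rewrite /k intrB intrM -qx -[(q%:Z)%:~R]/(q%:R : R); ring.
have k_ge0 : (0 <= k)%R.
  by rewrite -(ler0z R) kE mulr_ge0 ?ler0n // subr_ge0.
have k_lt : (k < q%:Z)%R.
  rewrite -(ltr_int R) kE -[X in _ < X]mulr1 ltr_pM2l ?ltr0n //.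
  by move: lt_floor1; rewrite intrD; lra.
case: k k_ge0 k_lt kE => // r _ r_lt rE; exists r => //.
rewrite -[r%:R]/((Posz r)%:~R : R) rE; field.
by rewrite pnatr_eq0 -lt0n.
Qed.

Lemma floorR_fourier q x z : (0 < q)%N -> q%:R * x = z%:~R ->
  (floorR x)%:C = (x - 2^-1 + (2 * q%:R)^-1)%:C
    + \sum_(1 <= j < q) ((q%:R)%:C * (1 - cexpi (- (2 * pi * j%:R / q%:R))))^-1
                        * cexpi (2 * pi * j%:R * x).
Proof.
move=> q_gt0 qx.
have qR0 : (q%:R : R) != 0 by rewrite pnatr_eq0 -lt0n.
have [r r_lt xE] := floor_add_frac q_gt0 qx.
set m := Num.floor x in xE.
set w := cexpi (2 * pi / q%:R : R).
have w_prim j : (0 < j < q)%N -> w ^+ j != 1.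
  by move=> j_range; rewrite cexpi_2pi_div_exp cexpi_2pi_div_neq1.
have summandE j : ((q%:R)%:C * (1 - cexpi (- (2 * pi * j%:R / q%:R))))^-1
                  * cexpi (2 * pi * j%:R * x)
                = ((q%:R : R)%:C)^-1 * (w ^+ (j * r) * (1 - (w ^+ j)^-1)^-1).
  have -> : 2 * pi * j%:R * x = 2 * pi * (m * j%:Z)%:~R + (j * r)%:R * (2 * pi / q%:R).
    by rewrite xE intrM natrM -[(j%:Z)%:~R]/(j%:R : R); field.
  rewrite cexpiN -cexpi_2pi_div_exp cexpiD cexpi_2pi_int mul1r cexpiMn -/w invfM.
  by rewrite mulrAC -mulrA.
rewrite (eq_bigr _ (fun j _ => summandE j)) -mulr_sumr.
have sumE : \sum_(1 <= j < q) w ^+ (j * r) * (1 - (w ^+ j)^-1)^-1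
    = ((q.-1)%:R - 2 * r%:R) / 2.
  rewrite -(sum_root_pow_inv_1subV q_gt0 (cexpi_2pi_div_expq R q_gt0) w_prim r_lt).
  by field.
rewrite sumE /floorR [in RHS]xE -/m.
rewrite !(rmorphD, rmorphB, rmorphM, fmorphV, rmorph_nat, rmorph_int).
have -> : (q.-1)%:R = q%:R - 1 :> R[i] by rewrite -{2}(prednK q_gt0) -natr1 addrK.
by field; rewrite pnatr_eq0 -lt0n.
Qed.

Lemma roundR_fourier_even q x z : (0 < q)%N -> ~~ odd q -> q%:R * x = z%:~R ->
  (roundR x)%:C = (x + (2 * q%:R)^-1)%:C
    + \sum_(1 <= j < q)
        ((-1) ^+ j * ((q%:R)%:C * (1 - cexpi (- (2 * pi * j%:R / q%:R))))^-1)
        * cexpi (2 * pi * j%:R * x).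
Proof.
move=> q_gt0 q_even qx.
have qE : q = (q./2).*2 by rewrite -{1}(odd_double_half q) (negbTE q_even).
have qx_half : q%:R * (x + 2^-1) = (z + (q./2)%:Z)%:~R.
  rewrite intrD mulrDr qx -[((q./2)%:Z)%:~R]/((q./2)%:R : R) {1}qE -muln2 natrM.
  by congr (_ + _); field.
rewrite /roundR -/(floorR _) (floorR_fourier q_gt0 qx_half).
congr (_ + _); first by congr (_%:C); ring.
apply: eq_bigr => j _.
have -> : 2 * pi * j%:R * (x + 2^-1) = 2 * pi * j%:R * x + pi * j%:R by field.
by rewrite cexpiD cexpi_pi_nat; ring.
Qed.

(* For odd [q = 2k+1], [x + 1/2] and [x + k/q] differ by [1/(2q)], too little to
   cross an integer from the grid [x + k/q] lies on. *)
Lemma floor_add_half_odd q x z : odd q -> q%:R * x = z%:~R ->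
  Num.floor (x + 2^-1) = Num.floor (x + (q./2)%:R / q%:R).
Proof.
move=> q_odd qx; set k := q./2; set y := x + k%:R / q%:R.
have qE : q = k.*2.+1 by rewrite -{1}(odd_double_half q) q_odd.
have q_gt0 : (0 : R) < q%:R by rewrite ltr0n qE.
have qR : (q%:R : R) = 2 * k%:R + 1 by rewrite qE -muln2 -addn1 natrD natrM mulrC.
have qy : q%:R * y = (z + k%:Z)%:~R.
  by rewrite intrD /y mulrDr qx -[(k%:Z)%:~R]/(k%:R : R); congr (_ + _); field; rewrite gt_eqF.
have yE : x + 2^-1 = y + (2 * q%:R)^-1 by rewrite /y qR; field; rewrite -qR gt_eqF.
apply: floor_def; have /andP[floor_le lt_floor1] := Num.Theory.floor_itv y.
set m := Num.floor y in floor_le lt_floor1 *.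
rewrite yE; apply/andP; split.
  by rewrite (le_trans floor_le) // lerDl invr_ge0 mulr_ge0 ?ler0n // ltW.
have : (z + k%:Z < q%:Z * (m + 1))%R.
  by rewrite -(ltr_int R) -qy intrM -[(q%:Z)%:~R]/(q%:R : R) ltr_pM2l.
rewrite -lezD1 -(ler_int R) intrD intrM -qy -[(q%:Z)%:~R]/(q%:R : R) => qy_le.
have y_le : y + q%:R^-1 <= (m + 1)%:~R by rewrite -(ler_pM2l q_gt0) mulrDr mulfV ?gt_eqF.
rewrite (lt_le_trans _ y_le) // ltrD2l ltf_pV2 ?posrE ?mulr_gt0 //.
by rewrite ltr_pMl // ltr1n.
Qed.

Lemma roundR_fourier_odd q x z : odd q -> q%:R * x = z%:~R ->
  (roundR x)%:C = x%:C
    + \sum_(1 <= j < q)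
        ((-1) ^+ j * ((q%:R)%:C * (cexpi (pi * j%:R / q%:R) - cexpi (- (pi * j%:R / q%:R))))^-1)
        * cexpi (2 * pi * j%:R * x).
Proof.
move=> q_odd qx; set k := q./2.
have qE : q = k.*2.+1 by rewrite -{1}(odd_double_half q) q_odd.
have q_gt0 : (0 < q)%N by rewrite qE.
have qR0 : (q%:R : R) != 0 by rewrite pnatr_eq0 -lt0n.
have qR : (q%:R : R) = 2 * k%:R + 1 by rewrite qE -muln2 -addn1 natrD natrM mulrC.
set y := x + k%:R / q%:R.
have qy : q%:R * y = (z + k%:Z)%:~R.
  by rewrite intrD /y mulrDr qx -[(k%:Z)%:~R]/(k%:R : R); congr (_ + _); field.
rewrite /roundR (floor_add_half_odd q_odd qx) -/k -/y -/(floorR _) (floorR_fourier q_gt0 qy).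
congr (_ + _); first by congr (_%:C); rewrite /y qR; field; rewrite -qR.
apply: eq_bigr => j _; set a := pi * j%:R / q%:R.
have -> : 2 * pi * j%:R * y = 2 * pi * j%:R * x + (pi * j%:R + - a).
  by rewrite /y /a qR; field; rewrite -qR.
have -> : - (2 * pi * j%:R / q%:R) = - a + - a by rewrite /a; field.
rewrite !cexpiD cexpi_pi_nat !cexpiN; set u := cexpi a.
have u0 : u != 0 := cexpi_neq0 a.
have -> : (q%:R)%:C * (1 - u^-1 * u^-1) = (q%:R)%:C * (u - u^-1) * u^-1 by field.
rewrite invfM invrK; set A := (_ * (u - u^-1))^-1; set E := cexpi (2 * pi * j%:R * x).
by transitivity (A * E * (-1) ^+ j * (u * u^-1)); [ring | rewrite divff // mulr1; ring].
Qed.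

End PointwiseFourier.

Section Expectation.
Local Open Scope complex_scope.
Context d (T : measurableType d) (R : realType) (P : probability T R).
Variable Y : T -> R.
Hypothesis mY : measurable_fun setT Y.

Local Notation RE f := (Rintegral P setT f).

Lemma fine_expectation (f : T -> R) : fine 'E_P[f] = RE f.
Proof. by rewrite unlock. Qed.

Lemma integrableD_fun (f g : T -> R) : P.-integrable setT (EFin \o f) ->
  P.-integrable setT (EFin \o g) -> P.-integrable setT (EFin \o (fun w => f w + g w)).
Proof. by move=> if_ ig; apply: eq_integrable (integrableD _ if_ ig). Qed.

Lemma integrableZl_fun (k : R) (f : T -> R) : P.-integrable setT (EFin \o f) ->
  P.-integrable setT (EFin \o (fun w => k * f w)).
Proof. by move=> if_; apply: eq_integrable (integrableZl _ k if_). Qed.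

Lemma integrable_cst_fun (k : R) : P.-integrable setT (EFin \o (fun _ : T => k)).
Proof. exact: finite_measure_integrable_cst. Qed.

Lemma integrable_bounded_comp (f : R -> R) (t : R) :
  measurable_fun setT f -> (forall y, `|f y| <= 1) ->
  P.-integrable setT (EFin \o (fun w => f (t * Y w))).
Proof.
move=> mf f_le1; apply: (le_integrable _ _ _ (integrable_cst_fun 1)) => //.
  apply/measurable_EFinP/(measurableT_comp mf).
  exact: measurableT_comp (mulrl_measurable t) mY.
by move=> w _ /=; rewrite lee_fin normr1.
Qed.

Lemma integrable_cos_comp (t : R) :
  P.-integrable setT (EFin \o (fun w => cos (t * Y w))).
Proof.
exact: integrable_bounded_comp (continuous_measurable_fun (@continuous_cos R)) (@cos_max R).
Qed.

Lemma integrable_sin_comp (t : R) :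
  P.-integrable setT (EFin \o (fun w => sin (t * Y w))).
Proof.
exact: integrable_bounded_comp (continuous_measurable_fun (@continuous_sin R)) (@sin_max R).
Qed.

Lemma Re_mul_cexpi (c : R[i]) (a : R) :
  complex.Re (c * cexpi a) = complex.Re c * cos a + - complex.Im c * sin a.
Proof. by case: c => ? ? /=; ring. Qed.

Lemma integrable_Re_cexpi (c : R[i]) (t : R) :
  P.-integrable setT (EFin \o (fun w => complex.Re (c * cexpi (t * Y w)))).
Proof.
apply: eq_integrable (integrableD_fun
  (integrableZl_fun _ (integrable_cos_comp t))
  (integrableZl_fun _ (integrable_sin_comp t))) => //.
by move=> w _ /=; rewrite Re_mul_cexpi.
Qed.

Lemma Rintegral_Re_cexpi (c : R[i]) (t : R) :
  RE (fun w => complex.Re (c * cexpi (t * Y w))) = complex.Re (c * charfun P Y t).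
Proof.
have icos := integrable_cos_comp t.
have isin := integrable_sin_comp t.
under eq_Rintegral do rewrite Re_mul_cexpi.
rewrite RintegralD ?RintegralZl //; try exact: integrableZl_fun.
by case: c => a b; rewrite /charfun /= !fine_expectation; ring.
Qed.

Lemma integrable_Re_sum_cexpi (I : Type) (s : seq I) (c : I -> R[i]) (t : I -> R) :
  P.-integrable setT
    (EFin \o (fun w => complex.Re (\sum_(i <- s) c i * cexpi (t i * Y w)))).
Proof.
elim: s => [|i s IHs].
  by under eq_fun do rewrite big_nil; exact: integrable_cst_fun.
under eq_fun do rewrite big_cons raddfD.
exact: integrableD_fun (integrable_Re_cexpi _ _) IHs.
Qed.

Lemma Rintegral_Re_sum_cexpi (I : Type) (s : seq I) (c : I -> R[i]) (t : I -> R) :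
  RE (fun w => complex.Re (\sum_(i <- s) c i * cexpi (t i * Y w)))
  = complex.Re (\sum_(i <- s) c i * charfun P Y (t i)).
Proof.
elim: s => [|i s IHs].
  by under eq_Rintegral do rewrite big_nil; rewrite big_nil Rintegral_cst // mul0r.
under eq_Rintegral do rewrite big_cons raddfD.
rewrite RintegralD ?Rintegral_Re_cexpi ?IHs ?big_cons ?raddfD //.
  exact: integrable_Re_cexpi.
exact: integrable_Re_sum_cexpi.
Qed.

Lemma Rintegral_ae_eq (f g : T -> R) :
  measurable_fun setT f -> measurable_fun setT g ->
  {ae P, forall w, f w = g w} -> RE f = RE g.
Proof.
move=> mf mg fg; congr fine; apply: ae_eq_integral => //; try exact/measurable_EFinP.
by apply: filterS fg => w -> _.
Qed.

Lemma measurable_integrable_fun (f : T -> R) :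
  P.-integrable setT (EFin \o f) -> measurable_fun setT f.
Proof. by move=> if_; apply/measurable_EFinP; exact: measurable_int if_. Qed.

(* The imaginary part is the real part of the sum with coefficients [c i * 'i]. *)
Lemma expectation_eq_fourier (I : Type) (s : seq I) (c : I -> R[i]) (t : I -> R)
    (G : T -> R) (k : R) :
  P.-integrable setT (EFin \o Y) -> measurable_fun setT G ->
  {ae P, forall w, (G w)%:C = (Y w + k)%:C + \sum_(i <- s) c i * cexpi (t i * Y w)} ->
  (fine 'E_P[G])%:C = (fine 'E_P[Y] + k)%:C + \sum_(i <- s) c i * charfun P Y (t i).
Proof.
move=> iY mG G_ae.
set S := fun (c' : I -> R[i]) w => complex.Re (\sum_(i <- s) c' i * cexpi (t i * Y w)).
have iS c' := integrable_Re_sum_cexpi s c' t.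
have ReG : {ae P, forall w, G w = Y w + k + S c w}.
  by apply: filterS G_ae => w /(congr1 (@complex.Re R)); rewrite raddfD.
have ImG : {ae P, forall w, 0 = S (fun i => c i * 'i) w}.
  apply: filterS G_ae => w /(congr1 (@complex.Im R)); rewrite raddfD /= add0r => ImS.
  rewrite /S; under eq_bigr do rewrite mulrAC; rewrite -mulr_suml ReiNIm -ImS.
  by rewrite oppr0.
have := Rintegral_ae_eq (measurable_cst _) (measurable_integrable_fun (iS _)) ImG.
rewrite Rintegral_cst // mul0r Rintegral_Re_sum_cexpi.
under eq_bigr do rewrite mulrAC; rewrite -mulr_suml ReiNIm => /esym/eqP.
rewrite oppr_eq0 => /eqP Im_sum.
apply/eqP; rewrite eq_complex raddfD [in X in _ && X]raddfD /= Im_sum addr0 !eqxx andbT.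
have iYk : P.-integrable setT (EFin \o (fun w => Y w + k)).
  exact: integrableD_fun iY (integrable_cst_fun k).
apply/eqP; rewrite !fine_expectation.
rewrite (Rintegral_ae_eq mG (measurable_integrable_fun (integrableD_fun iYk (iS c))) ReG).
rewrite RintegralD // RintegralD //; last exact: integrable_cst_fun.
by rewrite -[RE (fun _ => k)]fine_expectation expectation_cst Rintegral_Re_sum_cexpi.
Qed.

End Expectation.

Lemma measurable_floorR (R : realType) : measurable_fun setT (@floorR R).
Proof.
by apply: nondecreasing_measurable => // x y xy; rewrite /floorR ler_int le_floor.
Qed.

Lemma measurable_roundR (R : realType) : measurable_fun setT (@roundR R).
Proof.
by apply: nondecreasing_measurable => // x y xy; rewrite /roundR ler_int le_floor // lerD2r.
Qed.

Theorem theorem3 (d : measure_display) (T : measurableType d) (R : realType)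
  (P : probability T R) (X : {RV P >-> R}) (q : nat) :
  (1 <= q)%N ->
  {ae P, forall w, exists z : int, q%:R * X w = z%:~R} ->
  P.-integrable setT (EFin \o X) ->
  ((fine 'E_P[fun w => floorR (X w)])%E)%:C%C =
    ((fine 'E_P[X])%E - 2^-1 + (2 * q%:R)^-1)%:C%C
    + \sum_(1 <= j < q)
        ((q%:R)%:C%C * (1 - cexpi (- (2 * pi * j%:R / q%:R))))^-1
        * charfun P X (2 * pi * j%:R)
  /\
  (~~ odd q ->
   ((fine 'E_P[fun w => roundR (X w)])%E)%:C%C =
    ((fine 'E_P[X])%E + (2 * q%:R)^-1)%:C%C
    + \sum_(1 <= j < q)
        ((-1) ^+ j * ((q%:R)%:C%C * (1 - cexpi (- (2 * pi * j%:R / q%:R))))^-1)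
        * charfun P X (2 * pi * j%:R))
  /\
  (odd q ->
   ((fine 'E_P[fun w => roundR (X w)])%E)%:C%C =
    ((fine 'E_P[X])%E)%:C%C
    + \sum_(1 <= j < q)
        ((-1) ^+ j * ((q%:R)%:C%C * (cexpi (pi * j%:R / q%:R)
                                 - cexpi (- (pi * j%:R / q%:R))))^-1)
        * charfun P X (2 * pi * j%:R)).
Proof.
move=> q_gt0 qX iX.
have mX : measurable_fun setT X by [].
have mfloor := measurableT_comp (@measurable_floorR R) mX.
have mround := measurableT_comp (@measurable_roundR R) mX.
have fourier G k c := @expectation_eq_fourier _ _ _ P X mX _ (index_iota 1 q) c
  (fun j => 2 * pi * j%:R) G k iX.
split; [|split].
- rewrite -addrA; apply: fourier mfloor _.
  by apply: filterS qX => w [z /(floorR_fourier q_gt0)]; rewrite addrA.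
- move=> q_even; apply: fourier mround _.
  by apply: filterS qX => w [z /(roundR_fourier_even q_gt0 q_even)].
- move=> q_odd; rewrite -[X in X%:C%C + _](addr0 (fine 'E_P[X])%E).
  apply: fourier mround _.
  by apply: filterS qX => w [z /(roundR_fourier_odd q_odd)]; rewrite addr0.
Qed.
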